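(* Let $\gamma=[0;1,1,c_3,1,c_5,1,c_7,1,\dots]$, i.e. $\gamma$ has infinite continued fraction expansion $[c_0;c_1,c_2,\dots]$ with $c_0=0$, $c_n=1$ for $n$ even $\ge2$ and for $n=1$, and $c_{2n+1}\in\{1,2\}$ for all $n\in\mathbb{N}$. Then for every $m\in\mathbb{N}$, $$\frac{2}{\pi}m\tan\left(\frac{\pi}{2}\left(m\gamma^{-1}-\lfloor m\gamma^{-1}\rfloor\right)\right)>\frac{1}{3}.$$
   Context: $[c_0;c_1,c_2,\dots]$ denotes the continued fraction $c_0+\cfrac{1}{c_1+\cfrac{1}{c_2+\cdots}}$. $\mathbb{N}=\{1,2,\dots\}$. *)

From Stdlib Require Import Reals.
Open Scope R_scope.

Fixpoint cf_fin (c : nat -> R) (n : nat) : R :=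
  match n with
  | O => c O
  | S k => c O + / cf_fin (fun i => c (S i)) k
  end.

Definition cf_value (c : nat -> nat) (x : R) : Prop :=
  Un_cv (fun n => cf_fin (fun i => INR (c i)) n) x.

(* Write y_k = 1 + 1/t_{2k+2}, where t_j is the j-th complete quotient of gamma, so that
   1/gamma = y_0. Since the even partial quotients are 1, y_k = (2u+1)/(u+1) with
   u = t_{2k+3} >= 3/2, and u - y_{k+1} = c_{2k+3} - 1 is an integer; only c_{2k+3} >= 1
   matters. For d = m y_0 - p >= 0, either p <= m and d >= 3/5, or m' = 2m - p is a smaller
   positive multiplier with m' y_1 - p' = (u+1) d for an integer p'. Strong induction on m
   thus gives m d >= 1/3 + 4/9 d, and tan x >= x converts this into the claim. *)

From Stdlib Require Import Reals Lra Lia Psatz ZArith.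
From Coquelicot Require Import Coquelicot.
Open Scope R_scope.

Lemma cf_fin_ext (f g : nat -> R) (n : nat) :
  (forall i, f i = g i) -> cf_fin f n = cf_fin g n.
Proof.
  revert f g; induction n as [|n IH]; intros f g Hfg; simpl.
  - apply Hfg.
  - rewrite Hfg, (IH _ (fun i => g (S i))) by (intro; apply Hfg). reflexivity.
Qed.

Lemma Rinv_pos_le_1 (x : R) : 1 <= x -> 0 < / x <= 1.
Proof.
  intro Hx. split; [apply Rinv_0_lt_compat; lra|].
  rewrite <- Rinv_1. apply Rinv_le_contravar; lra.
Qed.

Lemma cf_fin_bounds (f : nat -> R) (n : nat) :
  (forall i, 1 <= f i) -> 1 <= cf_fin f n <= f O + 1.
Proof.
  revert f; induction n as [|n IH]; intros f Hf; simpl.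
  - specialize (Hf O); lra.
  - pose proof (Rinv_pos_le_1 _ (proj1 (IH _ (fun i => Hf (S i))))).
    specialize (Hf O); lra.
Qed.

Lemma cf_value_shift (c : nat -> nat) (x : R) :
  (forall i, (1 <= i)%nat -> (1 <= c i)%nat) -> cf_value c x ->
  0 < x - INR (c O) <= 1 /\ cf_value (fun i => c (S i)) (/ (x - INR (c O))).
Proof.
  intros Hc Hx.
  set (b := cf_fin (fun i => INR (c (S i)))).
  set (K := INR (c 1%nat) + 1).
  assert (Hb : forall n, 1 <= b n <= K).
  { intro n. apply cf_fin_bounds. intro i. apply (le_INR 1), Hc. lia. }
  assert (Hlim : is_lim_seq (fun n => / b n) (x - INR (c O))).
  { apply is_lim_seq_Reals, is_lim_seq_incr_1 in Hx.
    apply (is_lim_seq_ext (fun n => cf_fin (fun i => INR (c i)) (S n) - INR (c O))).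
    { intro n. simpl. unfold b. ring. }
    apply is_lim_seq_minus'; [exact Hx | apply is_lim_seq_const]. }
  assert (Hlow : / K <= x - INR (c O)).
  { refine (is_lim_seq_le (fun _ => / K) _ (/ K) _ _ (is_lim_seq_const _) Hlim).
    intro n. specialize (Hb n). apply Rinv_le_contravar; lra. }
  assert (Hup : x - INR (c O) <= 1).
  { refine (is_lim_seq_le _ (fun _ => 1) _ 1 _ Hlim (is_lim_seq_const _)).
    intro n. apply Rinv_pos_le_1, Hb. }
  assert (Hpos : 0 < x - INR (c O)).
  { assert (HK : 1 <= K) by (specialize (Hb O); lra).
    pose proof (Rinv_pos_le_1 K HK). lra. }
  split; [lra|].
  apply is_lim_seq_Reals.
  apply (is_lim_seq_ext (fun n => / / b n)); [intro n; apply Rinv_inv|].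
  apply (is_lim_seq_inv _ (x - INR (c O))); [exact Hlim|].
  intro E. injection E. lra.
Qed.

Lemma cf_value_ext (c c' : nat -> nat) (x : R) :
  (forall i, c i = c' i) -> cf_value c x -> cf_value c' x.
Proof.
  intros Hcc' Hx. unfold cf_value.
  apply (Un_cv_ext (fun n => cf_fin (fun i => INR (c i)) n)); [|exact Hx].
  intro n. apply cf_fin_ext. intro i. rewrite Hcc'. reflexivity.
Qed.

Fixpoint complete_quotient (c : nat -> nat) (x : R) (j : nat) : R :=
  match j with
  | O => x
  | S k => / (complete_quotient c x k - INR (c k))
  end.

Section CompleteQuotients.

Variables (c : nat -> nat) (x : R).
Hypothesis c_pos : forall i, (1 <= i)%nat -> (1 <= c i)%nat.
Hypothesis x_cf : cf_value c x.

Lemma c_pos_tail (j : nat) : forall i, (1 <= i)%nat -> (1 <= c (j + i))%nat.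
Proof. intros i Hi. apply c_pos. lia. Qed.

Lemma cf_value_complete_quotient (j : nat) :
  cf_value (fun i => c (j + i)%nat) (complete_quotient c x j).
Proof.
  induction j as [|j IH]; simpl; [exact x_cf|].
  assert (Htail := cf_value_shift _ _ (c_pos_tail j) IH).
  cbv beta in Htail. rewrite Nat.add_0_r in Htail.
  apply (cf_value_ext (fun i => c (j + S i)%nat)); [intro i; f_equal; lia|].
  apply Htail.
Qed.

Lemma complete_quotient_sub_bounds (j : nat) :
  0 < complete_quotient c x j - INR (c j) <= 1.
Proof.
  assert (H := cf_value_shift _ _ (c_pos_tail j) (cf_value_complete_quotient j)).
  cbv beta in H. rewrite Nat.add_0_r in H. apply H.
Qed.

Lemma complete_quotient_rec (j : nat) :
  complete_quotient c x j = INR (c j) + / complete_quotient c x (S j).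
Proof. simpl. rewrite Rinv_inv. ring. Qed.

Lemma complete_quotient_ge1 (j : nat) : 1 <= complete_quotient c x (S j).
Proof.
  pose proof (complete_quotient_sub_bounds j). simpl.
  rewrite <- Rinv_1. apply Rinv_le_contravar; lra.
Qed.

End CompleteQuotients.

Lemma descent_step_ineq (m m' u d : R) :
  3/2 <= u -> 0 <= d -> 2 <= m -> m = (u + 1) * (m' - d) ->
  1/3 + 4/9 * ((u + 1) * d) <= m' * ((u + 1) * d) ->
  1/3 + 4/9 * d <= m * d.
Proof.
  intros Hu Hd Hm Hmm' IH.
  destruct (Rle_dec d (4/15)) as [Hsmall|Hlarge].
  - assert (0 <= d * (4/9 * u - (u + 1) * d)) by (apply Rmult_le_pos; nra).
    rewrite Hmm'. nra.
  - nra.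
Qed.

Lemma mobius_bounds (u : R) : 3/2 <= u -> 8/5 <= (2 * u + 1) / (u + 1) < 2.
Proof.
  intro Hu. split.
  - apply (Rmult_le_reg_r (u + 1)); [lra|]. field_simplify; lra.
  - apply (Rmult_lt_reg_r (u + 1)); [lra|]. field_simplify; lra.
Qed.

Section Descent.

Variable P : R -> Prop.
Hypothesis P_unfold : forall y, P y ->
  exists u y' (z : Z), P y' /\ 3/2 <= u /\ y = (2 * u + 1) / (u + 1) /\ u - y' = IZR z.

Lemma descent (m : nat) : (1 <= m)%nat ->
  forall y (p : Z), P y -> 0 <= INR m * y - IZR p ->
  1/3 + 4/9 * (INR m * y - IZR p) <= INR m * (INR m * y - IZR p).
Proof.
  induction m as [m IH] using lt_wf_ind.
  intros Hm y p Py Hd.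
  destruct (P_unfold y Py) as (u & y' & z & Py' & Hu & Hy & Hz).
  pose proof (mobius_bounds u Hu) as Hy_bounds. rewrite <- Hy in Hy_bounds.
  assert (Hm1 : 1 <= INR m) by (apply (le_INR 1); lia).
  set (d := INR m * y - IZR p) in *.
  destruct (Z_le_gt_dec p (Z.of_nat m)) as [Hp|Hp].
  - apply IZR_le in Hp. rewrite <- INR_IZR_INZ in Hp.
    assert (3/5 <= d) by (unfold d; nra). nra.
  - assert (Hp2 : (p < 2 * Z.of_nat m)%Z).
    { apply lt_IZR. rewrite mult_IZR, <- INR_IZR_INZ. unfold d in Hd. simpl. nra. }
    set (m' := Z.to_nat (2 * Z.of_nat m - p)).
    assert (Hm' : INR m' = 2 * INR m - IZR p).
    { unfold m'. rewrite INR_IZR_INZ, Z2Nat.id by lia.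
      rewrite minus_IZR, mult_IZR, <- INR_IZR_INZ. reflexivity. }
    set (p' := (p - Z.of_nat m - z * Z.of_nat m')%Z).
    assert (Hd' : INR m' * y' - IZR p' = (u + 1) * d).
    { unfold p', d. rewrite !minus_IZR, mult_IZR, <- !INR_IZR_INZ.
      replace y' with (u - IZR z) by lra. rewrite Hm', Hy. field. lra. }
    assert (Hmm' : INR m = (u + 1) * (INR m' - d)).
    { unfold d. rewrite Hm', Hy. field. lra. }
    assert (Hm2 : 2 <= INR m) by (apply (le_INR 2); lia).
    apply (descent_step_ineq _ (INR m') u); try assumption.
    rewrite <- Hd'. apply IH; [unfold m'; lia | unfold m'; lia | exact Py' |].
    rewrite Hd'. nra.
Qed.

End Descent.

Section Gamma.

Variables (c : nat -> nat) (gamma : R).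
Hypothesis c_0 : c O = O.
Hypothesis c_1 : c 1%nat = 1%nat.
Hypothesis c_even : forall n, (1 <= n)%nat -> c (2 * n)%nat = 1%nat.
Hypothesis c_odd_pos : forall n, (1 <= c (2 * n + 1))%nat.
Hypothesis gamma_cf : cf_value c gamma.

Local Notation t := (complete_quotient c gamma).

Lemma gamma_c_pos (i : nat) : (1 <= i)%nat -> (1 <= c i)%nat.
Proof.
  intro Hi. destruct (Nat.Even_or_Odd i) as [[n ->]|[n ->]].
  - rewrite c_even by lia. lia.
  - apply c_odd_pos.
Qed.

Lemma even_quotient (k : nat) : t (2 * k + 2) = 1 + / t (2 * k + 3).
Proof.
  replace (2 * k + 2)%nat with (2 * S k)%nat by lia.
  replace (2 * k + 3)%nat with (S (2 * S k)) by lia.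
  rewrite (complete_quotient_rec c gamma (2 * S k)), c_even by lia. reflexivity.
Qed.

Lemma odd_quotient_ge (k : nat) : 3/2 <= t (2 * k + 3).
Proof.
  rewrite (complete_quotient_rec c gamma (2 * k + 3)).
  replace (S (2 * k + 3)) with (2 * S k + 2)%nat by lia.
  rewrite even_quotient.
  assert (Hc : 1 <= INR (c (2 * k + 3)%nat)).
  { apply (le_INR 1). replace (2 * k + 3)%nat with (2 * S k + 1)%nat by lia. apply c_odd_pos. }
  assert (Hw : 1 <= t (2 * S k + 3)).
  { replace (2 * S k + 3)%nat with (S (2 * S k + 2)) by lia.
    exact (complete_quotient_ge1 c gamma gamma_c_pos gamma_cf _). }
  pose proof (Rinv_pos_le_1 _ Hw).
  assert (/ 2 <= / (1 + / t (2 * S k + 3))) by (apply Rinv_le_contravar; lra).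
  lra.
Qed.

Lemma inv_gamma : / gamma = 1 + / t 2.
Proof.
  assert (E := complete_quotient_rec c gamma 1). rewrite c_1 in E. simpl INR in E.
  rewrite <- E. simpl. rewrite c_0. simpl. f_equal. ring.
Qed.

Lemma gamma_quotients_unfold (y : R) :
  (exists k, y = 1 + / t (2 * k + 2)) ->
  exists u y' (z : Z), (exists k, y' = 1 + / t (2 * k + 2)) /\
    3/2 <= u /\ y = (2 * u + 1) / (u + 1) /\ u - y' = IZR z.
Proof.
  intros [k ->].
  exists (t (2 * k + 3)), (1 + / t (2 * S k + 2)), (Z.of_nat (c (2 * k + 3)) - 1)%Z.
  assert (Hu := odd_quotient_ge k).
  split; [now exists (S k)|]. split; [exact Hu|]. split.
  - rewrite even_quotient. field. lra.
  - rewrite (complete_quotient_rec c gamma (2 * k + 3)), minus_IZR, <- INR_IZR_INZ.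
    replace (S (2 * k + 3)) with (2 * S k + 2)%nat by lia. simpl. ring.
Qed.

Lemma mul_frac_inv_gamma_gt (m : nat) : (1 <= m)%nat ->
  1/3 < INR m * (INR m / gamma - IZR (Int_part (INR m / gamma))).
Proof.
  intro Hm.
  set (y0 := 1 + / t 2).
  assert (Hy : INR m / gamma = INR m * y0) by (unfold Rdiv, y0; rewrite inv_gamma; reflexivity).
  rewrite Hy. destruct (base_Int_part (INR m * y0)) as [Hp _].
  assert (H := descent _ gamma_quotients_unfold m Hm y0 (Int_part (INR m * y0))
                 (ex_intro _ O eq_refl) ltac:(lra)).
  set (d := INR m * y0 - IZR (Int_part (INR m * y0))) in *.
  assert (1 <= INR m) by (apply (le_INR 1); lia).
  nra.
Qed.

End Gamma.

Lemma tan_ge_id (x : R) : 0 <= x < PI / 2 -> x <= tan x.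
Proof.
  intros [H0 H1]. destruct (Req_dec x 0) as [->|Hx]; [rewrite tan_0; lra|].
  assert (HPI := PI_RGT_0).
  destruct (MVT_cor2 tan (fun y => 1 + tan y ^ 2) 0 x) as [y [Hy _]]; [lra| |].
  { intros y Hy. assert (Hdom : - PI / 2 < y < PI / 2) by lra.
    apply (derive_pt_eq_1 _ _ _ (derivable_pt_tan y Hdom)), derive_pt_tan. }
  rewrite tan_0 in Hy. assert (0 <= tan y ^ 2) by apply pow2_ge_0. nra.
Qed.

Theorem lemma5p4 (c : nat -> nat)
  (h0 : c O = O) (h1 : c 1%nat = 1%nat)
  (heven : forall n : nat, (1 <= n)%nat -> c (2 * n)%nat = 1%nat)
  (hodd : forall n : nat, (1 <= n)%nat ->
            c (2 * n + 1)%nat = 1%nat \/ c (2 * n + 1)%nat = 2%nat)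
  (gamma : R) (hgamma : cf_value c gamma) :
  forall m : nat, (1 <= m)%nat ->
    2 / PI * INR m * tan (PI / 2 * (INR m / gamma - IZR (Int_part (INR m / gamma))))
      > 1 / 3.
Proof.
  intros m Hm.
  assert (c_odd_pos : forall n, (1 <= c (2 * n + 1))%nat).
  { intros [|n]; [simpl; now rewrite h1|].
    destruct (hodd (S n)) as [E|E]; [lia | rewrite E; lia | rewrite E; lia]. }
  assert (Hmd := mul_frac_inv_gamma_gt c gamma h0 h1 heven c_odd_pos hgamma m Hm).
  destruct (base_Int_part (INR m / gamma)) as [Hp1 Hp2].
  set (d := INR m / gamma - IZR (Int_part (INR m / gamma))) in *.
  assert (Hd : 0 <= d < 1) by (unfold d; lra).
  assert (HPI := PI_RGT_0).
  assert (Htan := tan_ge_id (PI / 2 * d) ltac:(nra)).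
  assert (Hm0 : 0 <= 2 / PI * INR m)
    by (apply Rmult_le_pos; [apply Rlt_le, Rdiv_lt_0_compat; lra | apply pos_INR]).
  assert (INR m * d <= 2 / PI * INR m * tan (PI / 2 * d)).
  { replace (INR m * d) with (2 / PI * INR m * (PI / 2 * d)) by (field; lra).
    apply Rmult_le_compat_l; assumption. }
  lra.
Qed.
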